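(* Let $H=(V,E)$ be an unweighted hypergraph of rank $r$ on $n$ vertices and $k$ a positive integer. Suppose $\textsc{Partition}(G,t)$ is a procedure that, given a hypergraph $G$ and integer $t$, returns a $2t$-light $t$-partition of $G$. Consider the algorithm $\textsc{WeakEdges}(H,k)$: set $E'=\emptyset$; repeat $1+\log_2 n$ times: $E'\leftarrow E'\cup\textsc{Partition}(H,2rk)$ and $H\leftarrow H-E'$; return $E'$. Then $\textsc{WeakEdges}(H,k)$ returns a $4rk$-light set $E'$ (with respect to the input hypergraph $H$) that contains all the $k$-weak edges of $H$, using $O(\log n)$ calls to $\textsc{Partition}$.
   Context: A hypergraph $H=(V,E)$ has edges that are subsets of $V$; its rank is $\max_{e\in E}|e|$. For $U\subseteq V$, $H[U]=(U,\{e\in E:e\subseteq U\})$; for $A\subseteq V$, $\delta_H(A)$ is the set of edges meeting both $A$ and $V\setminus A$; $\lambda(H)=\min_{\emptyset\subsetneq A\subsetneq V}|\delta_H(A)|$. The strength of $e$ is $\gamma_H(e)=\max_{e\subseteq U\subseteq V}\lambda(H[U])$; $e$ is $k$-weak if $\gamma_H(e)<k$. $\kappa(G)$ is the number of connected components of $G$. A set $E'\subseteq E(G)$ is $\ell$-light if $|E'|\le\ell(\kappa(G-E')-\kappa(G))$. An edge $e$ of $G$ is $t$-crisp if there is $X\subseteq V(G)$ with $e\in\delta_G(X)$ and $|\delta_G(X)|<t$. A $t$-partition of $G$ is a set of edges of $G$ containing all $t$-crisp edges of $G$. *)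

From mathcomp Require Import all_boot.
Set Implicit Arguments. Unset Strict Implicit. Unset Printing Implicit Defensive.

(* A hypergraph is modelled on a fixed finite vertex type V and a finite type
   Ed of edge labels with incidence map inc : Ed -> {set V} (so parallel edges
   are allowed).  A (sub)hypergraph on vertex set V is a set F : {set Ed} of
   edge labels; G - E' is F :\: E'. *)
Section Hyper.
Variables (V Ed : finType) (inc : Ed -> {set V}).

Definition hrank (F : {set Ed}) : nat := \max_(e in F) #|inc e|.

Definition hadj (F : {set Ed}) : rel V :=
  fun x y => [exists e in F, (x \in inc e) && (y \in inc e)].

Definition hcomps (F : {set Ed}) : {set {set V}} :=
  [set [set y | connect (hadj F) x y] | x in [set: V]].
Definition kappa (F : {set Ed}) : nat := #|hcomps F|.

Definition hdelta (F : {set Ed}) (A : {set V}) : {set Ed} :=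
  [set e in F | (inc e :&: A != set0) && (inc e :\: A != set0)].

Definition induced (F : {set Ed}) (U : {set V}) : {set Ed} :=
  [set e in F | inc e \subset U].

(* lambda(H[U]) < k, where lambda(H[U]) = min over nonempty proper A of U of
   |delta_{H[U]}(A)| (= +infinity when there is no such A). *)
Definition lambda_lt (F : {set Ed}) (U : {set V}) (k : nat) : Prop :=
  exists A : {set V}, [/\ A != set0, A \proper U &
                          #|hdelta (induced F U) A| < k].

(* e is k-weak in (V,F): gamma(e) = max_{inc e <= U} lambda(H[U]) < k *)
Definition k_weak (F : {set Ed}) (k : nat) (e : Ed) : Prop :=
  forall U : {set V}, inc e \subset U -> lambda_lt F U k.

Definition light (F E' : {set Ed}) (l : nat) : Prop :=
  E' \subset F /\ #|E'| <= l * (kappa (F :\: E') - kappa F).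

Definition crisp (F : {set Ed}) (t : nat) (e : Ed) : Prop :=
  exists X : {set V}, e \in hdelta F X /\ #|hdelta F X| < t.

Definition t_partition (F : {set Ed}) (t : nat) (S : {set Ed}) : Prop :=
  S \subset F /\ forall e, crisp F t e -> e \in S.

Fixpoint weak_edges_loop (P : {set Ed} -> nat -> {set Ed}) (t m : nat)
    (Hc E' : {set Ed}) : {set Ed} :=
  match m with
  | 0 => E'
  | m'.+1 => let E'' := E' :|: P Hc t in
             weak_edges_loop P t m' (Hc :\: E'') E''
  end.

Definition weak_edges (P : {set Ed} -> nat -> {set Ed}) (F : {set Ed})
    (k : nat) : {set Ed} :=
  weak_edges_loop P (2 * hrank F * k) (trunc_log 2 #|V|).+1 F set0.

End Hyper.

From mathcomp Require Import all_boot.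
From mathcomp Require Import zify.
Set Implicit Arguments. Unset Strict Implicit. Unset Printing Implicit Defensive.

(* Call U k-connected when lambda(H[U]) >= k.  Two k-connected sets sharing a vertex
   have a k-connected union, so the maximal ones (the k-components) partition V, and a
   k-weak edge lies in no k-component.  Splitting along cuts of size < k shows that a
   union of s k-components contains at most k(s - 1) such edges.

   A k-component is active in G when some edge of G crosses it; crossing edges lie in
   no k-component.  If G' keeps no 2rk-crisp edge of G, each component active in G' is
   crossed by at least 2rk edges of G, while each edge crosses at most r components, so
   2rk |active(G')| <= r k (|active(G)| - 1): every round of WeakEdges halves the number
   of active components.  After 1 + log2 n rounds none is left, so every k-weak edge has
   been collected.  Lightness adds up over the rounds since the component counts
   telescope. *)

Lemma subset_sideE (T : finType) (K A : {set T}) x : x \in K ->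
  (K \subset A) || (K \subset ~: A) -> (K \subset A) = (x \in A).
Proof.
move=> xK /orP[KA | KC]; first by rewrite KA (subsetP KA).
have := subsetP KC x xK; rewrite inE => /negbTE xA; rewrite xA.
by apply/negbTE/negP => /subsetP/(_ x xK); rewrite xA.
Qed.

Lemma cover_sides (T : finType) (S : {set {set T}}) (A : {set T}) :
  (forall K, K \in S -> (K \subset A) || (K \subset ~: A)) ->
  cover (S :&: [set K : {set T} | K \subset A]) = cover S :&: A /\
  cover (S :\: [set K : {set T} | K \subset A]) = cover S :\: A.
Proof.
move=> sides; split; apply/setP => x; rewrite !inE; apply/bigcupP/andP.
- case=> K; rewrite !inE => /andP[KS KA] xK.
  by split; [apply/bigcupP; exists K | apply: (subsetP KA)].
- case=> /bigcupP[K KS xK] xA; exists K => //.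
  by rewrite !inE KS (subset_sideE xK (sides K KS)) xA.
- case=> K; rewrite !inE => /andP[nKA KS] xK.
  by split; [rewrite -(subset_sideE xK (sides K KS)) | apply/bigcupP; exists K].
- case=> xA /bigcupP[K KS xK]; exists K => //.
  by rewrite !inE KS (subset_sideE xK (sides K KS)) xA.
Qed.

Section Hypergraph.
Variables (V Ed : finType) (inc : Ed -> {set V}).

Lemma hdeltaS (G G' : {set Ed}) A : G' \subset G ->
  hdelta inc G' A \subset hdelta inc G A.
Proof.
by move=> sG; apply/subsetP => e; rewrite !inE => /andP[/(subsetP sG) -> ->].
Qed.

Lemma inducedS (G G' : {set Ed}) U : G' \subset G ->
  induced inc G' U \subset induced inc G U.
Proof.
by move=> sG; apply/subsetP => e; rewrite !inE => /andP[/(subsetP sG) -> ->].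
Qed.

Lemma hdelta_induced_setI (F : {set Ed}) (U U' A : {set V}) : U' \subset U ->
  hdelta inc (induced inc F U') (A :&: U') \subset hdelta inc (induced inc F U) A.
Proof.
move=> sU; apply/subsetP => e; rewrite !inE.
move=> /andP[/andP[eF eU'] /andP[/set0Pn[x] /[!inE] /and3P[xe xA _] /set0Pn[y]]].
rewrite !inE => /andP[+ ye]; rewrite (subsetP eU' y ye) andbT => yA.
rewrite eF (subset_trans eU' sU) /=; apply/andP; split; apply/set0Pn.
- by exists x; rewrite !inE xe xA.
- by exists y; rewrite !inE yA ye.
Qed.

Lemma card_induced_split (F : {set Ed}) (Y A : {set V}) :
  #|induced inc F Y| <= #|induced inc F (Y :&: A)| + #|induced inc F (Y :\: A)|
                        + #|hdelta inc (induced inc F Y) A|.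
Proof.
apply: leq_trans (leq_add (leq_card_setU _ _) (leqnn _)).
apply: leq_trans (leq_card_setU _ _); apply/subset_leq_card/subsetP => e.
rewrite !inE => /andP[eF eY]; rewrite eF eY /=.
case eA: (inc e \subset A); first by rewrite subsetI eY eA.
case eC: (inc e \subset ~: A); first by rewrite setDE !subsetI eY eC orbT.
rewrite setDE !subsetI eY eA eC /=; apply/andP; split; apply/set0Pn.
- case/subsetPn: eC => x xe; rewrite inE negbK => xA.
  by exists x; rewrite !inE xe xA.
- by case/subsetPn: eA => x xe xA; exists x; rewrite !inE xe xA.
Qed.

Lemma card_inc_le_hrank (F : {set Ed}) e : e \in F -> #|inc e| <= hrank inc F.
Proof. exact: leq_bigmax_cond. Qed.

Lemma light_card (G Q : {set Ed}) l : light inc G Q l ->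
  #|Q| + l * kappa inc G <= l * kappa inc (G :\: Q).
Proof.
case=> _ lightQ; case: (leqP (kappa inc G) (kappa inc (G :\: Q))) => kle.
  by rewrite -(subnK kle) mulnDr leq_add2r.
have kdiff0 : kappa inc (G :\: Q) - kappa inc G = 0 by apply/eqP; rewrite subn_eq0 ltnW.
have /eqP Q0 : Q == set0 by rewrite -cards_eq0 -leqn0 (leq_trans lightQ) // kdiff0 muln0.
by rewrite Q0 setD0 ltnn in kle.
Qed.

Lemma k_weak_inc_neq0 (F : {set Ed}) k e : k_weak inc F k e -> inc e != set0.
Proof.
case/(_ _ (subxx _)) => A [/set0Pn[x xA] /proper_sub/subsetP sA _].
by apply/set0Pn; exists x; apply: sA.
Qed.

Lemma crisp_free_hdelta (G G' : {set Ed}) t X : G' \subset G ->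
  (forall e, crisp inc G t e -> e \notin G') ->
  hdelta inc G' X != set0 -> t <= #|hdelta inc G X|.
Proof.
move=> sG crisp_out /set0Pn[e eX]; rewrite leqNgt; apply/negP => small.
have eG' : e \in G' by move: eX; rewrite inE => /andP[].
suff : crisp inc G t e by move/crisp_out; rewrite eG'.
by exists X; split; first exact: subsetP (hdeltaS X sG) e eX.
Qed.

Lemma weak_edges_loop_light (F : {set Ed}) (P : {set Ed} -> nat -> {set Ed}) (t m : nat)
    (Hc E' : {set Ed}) :
  (forall G : {set Ed}, G \subset F -> light inc G (P G t) (2 * t)) ->
  Hc = F :\: E' -> E' \subset F ->
  let R := weak_edges_loop P t m Hc E' in
  R \subset F /\ #|R| + 2 * t * kappa inc Hc <= #|E'| + 2 * t * kappa inc (F :\: R).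
Proof.
move=> Plight; elim: m Hc E' => [|m IH] Hc E' eHc E'F /=; first by rewrite eHc.
set Q := P Hc t; set E'' := E' :|: Q.
have HcF : Hc \subset F by rewrite eHc subsetDl.
have [QHc _] := Plight Hc HcF.
have stepQ : #|Q| + 2 * t * kappa inc Hc <= 2 * t * kappa inc (Hc :\: Q).
  exact: light_card (Plight Hc HcF).
have eHcQ : Hc :\: Q = F :\: E'' by rewrite eHc setDDl.
have eHc'' : Hc :\: E'' = F :\: E'' by rewrite eHc setDDl setUA setUid.
have E''F : E'' \subset F by rewrite subUset E'F (subset_trans QHc HcF).
have [RF cardR] := IH _ _ eHc'' E''F; split=> //.
have cardE'' : #|E''| <= #|E'| + #|Q| by apply: leq_card_setU.
rewrite eHcQ -eHc'' in stepQ; lia.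
Qed.

Section KComponents.
Variables (F : {set Ed}) (k : nat).

Definition k_connected (U : {set V}) : bool :=
  [forall A : {set V}, (A != set0) && (A \proper U) ==>
                       (k <= #|hdelta inc (induced inc F U) A|)].

Lemma k_connectedPn U : reflect (lambda_lt inc F U k) (~~ k_connected U).
Proof.
apply: (iffP forallPn) => [[A] | [A [A0 AU small]]].
  by rewrite negb_imply -ltnNge => /andP[/andP[A0 AU] small]; exists A.
by exists A; rewrite A0 AU -ltnNge.
Qed.

Lemma k_connected1 v : k_connected [set v].
Proof.
apply/forallP => A; apply/implyP => /andP[A0 /proper_card].
by rewrite cards1 ltnS leqn0 cards_eq0 (negbTE A0).
Qed.

Lemma k_connected_side (K U A : {set V}) : k_connected K -> K \subset U ->
  #|hdelta inc (induced inc F U) A| < k -> (K \subset A) || (K \subset ~: A).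
Proof.
move=> /forallP kK sKU small.
have := kK (A :&: K); rewrite properEneq subsetIr andbT.
case: (boolP ((A :&: K != set0) && (A :&: K != K))) => [_ /= kle | ].
  have := leq_trans kle (subset_leq_card (hdelta_induced_setI F A sKU)).
  by rewrite leqNgt small.
rewrite negb_and !negbK => /orP[/eqP AK0 | /eqP AK] _.
  by rewrite -disjoints_subset -setI_eq0 setIC AK0 eqxx orbT.
by rewrite -{1}AK subsetIl.
Qed.

Lemma k_connectedU U1 U2 x : k_connected U1 -> k_connected U2 ->
  x \in U1 -> x \in U2 -> k_connected (U1 :|: U2).
Proof.
move=> k1 k2 x1 x2; apply: contraT => /k_connectedPn[A [A0 AU small]].
have side1 := subset_sideE x1 (k_connected_side k1 (subsetUl _ _) small).
have side2 := subset_sideE x2 (k_connected_side k2 (subsetUr _ _) small).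
case xA: (x \in A) in side1 side2.
  by move: AU; rewrite properE subUset side1 side2 andbF.
have := k_connected_side k1 (subsetUl _ _) small; rewrite side1 /= => C1.
have := k_connected_side k2 (subsetUr _ _) small; rewrite side2 /= => C2.
have /subsetP AC : A \subset ~: A by rewrite (subset_trans (proper_sub AU)) // subUset C1 C2.
by case/set0Pn: A0 => y yA; move: (AC y yA); rewrite inE yA.
Qed.

Definition kcomp (v : V) : {set V} :=
  [arg max_(U > [set v] | (v \in U) && k_connected U) #|U|].

Lemma mem_kcomp v : v \in kcomp v.
Proof. by rewrite /kcomp; case: arg_maxnP => [|U /andP[]]; rewrite ?set11 ?k_connected1. Qed.

Lemma k_connected_kcomp v : k_connected (kcomp v).
Proof. by rewrite /kcomp; case: arg_maxnP => [|U /andP[]]; rewrite ?set11 ?k_connected1. Qed.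

Lemma kcomp_card_max v (U : {set V}) : v \in U -> k_connected U -> #|U| <= #|kcomp v|.
Proof.
move=> vU kU; rewrite /kcomp; case: arg_maxnP => [|M _ maxM].
  by rewrite set11 k_connected1.
by apply: maxM; rewrite vU kU.
Qed.

Lemma kcomp_max v (U : {set V}) : v \in U -> k_connected U -> U \subset kcomp v.
Proof.
move=> vU kU; have kUM := k_connectedU (k_connected_kcomp v) kU (mem_kcomp v) vU.
have /eqP -> : kcomp v == kcomp v :|: U.
  by rewrite eqEcard subsetUl (kcomp_card_max _ kUM) // inE mem_kcomp.
exact: subsetUr.
Qed.

Lemma kcomp_eq u v : u \in kcomp v -> kcomp u = kcomp v.
Proof.
move=> uv; have svu := kcomp_max uv (k_connected_kcomp v).
apply/eqP; rewrite eqEsubset svu andbT.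
exact: kcomp_max (subsetP svu v (mem_kcomp v)) (k_connected_kcomp u).
Qed.

Definition kcomps : {set {set V}} := kcomp @: [set: V].

Lemma kcompsE K x : K \in kcomps -> x \in K -> K = kcomp x.
Proof. by case/imsetP => v _ -> /kcomp_eq. Qed.

Lemma card_kcomps : #|kcomps| <= #|V|.
Proof. by rewrite (leq_trans (leq_imset_card _ _)) ?cardsT. Qed.

Lemma kcomps_not_k_connected (S : {set {set V}}) : S \subset kcomps -> 1 < #|S| ->
  ~~ k_connected (cover S).
Proof.
move=> Scomps /card_gt1P[K1 [K2 [K1S K2S]]]; apply: contra => kS.
have /imsetP[v1 _ eK1] := subsetP Scomps _ K1S.
have /imsetP[v2 _ eK2] := subsetP Scomps _ K2S; subst K1 K2.
have inS K v : K \in S -> v \in K -> v \in cover S by move=> KS vK; apply/bigcupP; exists K.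
have v1S := inS _ _ K1S (mem_kcomp v1).
by rewrite (kcomp_eq (subsetP (kcomp_max v1S kS) v2 (inS _ _ K2S (mem_kcomp v2)))).
Qed.

Definition kweak : {set Ed} := [set e in F | [forall v, ~~ (inc e \subset kcomp v)]].

Lemma k_weak_kweak e : e \in F -> k_weak inc F k e -> e \in kweak.
Proof.
move=> eF ew; rewrite inE eF; apply/forallP => v; apply/negP.
by move=> /ew/k_connectedPn; rewrite k_connected_kcomp.
Qed.

Lemma induced_kweak_kcomp K : K \in kcomps -> induced inc kweak K = set0.
Proof.
case/imsetP => v _ ->; apply/setP => e; rewrite !inE.
by apply/negP => /andP[/andP[_ /forallP/(_ v)/negP]].
Qed.

Lemma hdelta_kcomp (G : {set Ed}) K : G \subset F -> K \in kcomps ->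
  hdelta inc G K = [set e in G :&: kweak | inc e :&: K != set0].
Proof.
move=> GF KC; apply/setP => e; rewrite !in_set.
case eG: (e \in G) => //=.
case: (boolP (inc e :&: K != set0)) => [/set0Pn[x /setIP[xe xK]] | _]; rewrite ?andbF //=.
rewrite (kcompsE KC xK) setD_eq0 (subsetP GF e eG) andbT.
apply/idP/forallP => [+ v | /(_ x) //]; apply: contra => sub.
by rewrite (kcomp_eq (subsetP sub x xe)).
Qed.

Lemma card_kweak_cover (S : {set {set V}}) : S \subset kcomps -> S != set0 ->
  #|induced inc kweak (cover S)| + k <= k * #|S|.
Proof.
move: {2}#|S| (leqnn #|S|) => n; elim: n S => [|n IH] S Sn Scomps S0.
  by move: Sn; rewrite leqn0 cards_eq0 (negbTE S0).
case: (ltnP 1 #|S|) => [S2 | S1]; last first.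
  have /cards1P[K eS] : #|S| == 1 by rewrite eqn_leq S1 card_gt0 S0.
  subst S; rewrite cover1 cards1 induced_kweak_kcomp ?cards0 ?muln1 //.
  by rewrite -sub1set.
have [A [A0 AS small]] := k_connectedPn _ (kcomps_not_k_connected Scomps S2).
have sides K : K \in S -> (K \subset A) || (K \subset ~: A).
  move=> KS; apply: k_connected_side small; last exact: bigcup_sup.
  by have /imsetP[v _ ->] := subsetP Scomps K KS; apply: k_connected_kcomp.
have [coverA coverB] := cover_sides sides.
rewrite (setIidPr (proper_sub AS)) in coverA.
set SA := S :&: _ in coverA; set SB := S :\: _ in coverB.
have SA0 : SA != set0.
  by apply: contraNneq A0 => SA0; rewrite -coverA SA0 /cover big_set0.
have SB0 : SB != set0.
  apply: contraTneq AS => SB0; apply/properP => -[_ [x xS xA]].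
  have : x \in cover S :\: A by rewrite inE xA xS.
  by rewrite -coverB SB0 /cover big_set0 inE.
have cardS : #|SA| + #|SB| = #|S| := cardsID _ S.
have cardSA : 0 < #|SA| by rewrite card_gt0.
have cardSB : 0 < #|SB| by rewrite card_gt0.
have := IH SA ltac:(lia) (subset_trans (subsetIl _ _) Scomps) SA0.
have := IH SB ltac:(lia) (subset_trans (subsetDl _ _) Scomps) SB0.
rewrite coverA coverB -cardS mulnDr.
have := card_induced_split kweak (cover S) A; rewrite (setIidPr (proper_sub AS)).
have kweakF : kweak \subset F by apply/subsetP => e /[!inE] /andP[].
have := subset_leq_card (hdeltaS A (inducedS (cover S) kweakF)).
lia.
Qed.

Definition kactive (G : {set Ed}) : {set {set V}} :=
  [set K in kcomps | hdelta inc G K != set0].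

Lemma kactive_sub G : kactive G \subset kcomps.
Proof. by apply/subsetP => K /[!inE] /andP[]. Qed.

Lemma kactiveS (G G' : {set Ed}) : G' \subset G -> kactive G' \subset kactive G.
Proof.
move=> sG; apply/subsetP => K; rewrite !inE => /andP[-> /set0Pn[e eK]].
by apply/set0Pn; exists e; apply: subsetP (hdeltaS K sG) e eK.
Qed.

Lemma kcomp_kactive (G : {set Ed}) e x : G \subset F -> e \in G -> e \in kweak ->
  x \in inc e -> kcomp x \in kactive G.
Proof.
move=> GF eG ew xe; have Kx : kcomp x \in kcomps by apply: imset_f.
rewrite inE Kx hdelta_kcomp //; apply/set0Pn; exists e.
by rewrite inE in_setI eG ew; apply/set0Pn; exists x; rewrite inE xe mem_kcomp.
Qed.

Lemma card_kweak_kactive (G : {set Ed}) : G \subset F -> kactive G != set0 ->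
  #|G :&: kweak| + k <= k * #|kactive G|.
Proof.
move=> GF G0; apply: leq_trans (card_kweak_cover (kactive_sub G) G0).
rewrite leq_add2r; apply/subset_leq_card/subsetP => e /setIP[eG ew].
rewrite inE ew; apply/subsetP => x xe; apply/bigcupP.
by exists (kcomp x); [exact: kcomp_kactive GF eG ew xe | exact: mem_kcomp].
Qed.

Lemma sum_card_hdelta_kcomps (G : {set Ed}) : G \subset F ->
  \sum_(K in kcomps) #|hdelta inc G K| <= hrank inc F * #|G :&: kweak|.
Proof.
move=> GF.
rewrite (eq_bigr (fun K => \sum_(e in G :&: kweak) (inc e :&: K != set0 : nat))); last first.
  by move=> K KC; rewrite hdelta_kcomp // -sum1dep_card big_mkcondr.
rewrite exchange_big /= mulnC -sum_nat_const; apply: leq_sum => e /setIP[eG _].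
rewrite -big_mkcondr sum1dep_card.
apply: leq_trans (card_inc_le_hrank (subsetP GF e eG)).
apply: leq_trans (leq_imset_card kcomp (inc e)); apply/subset_leq_card/subsetP => K.
rewrite inE => /andP[KC /set0Pn[x /setIP[xe xK]]].
by rewrite (kcompsE KC xK) imset_f.
Qed.

Lemma kactive_halve (G G' : {set Ed}) : 0 < k -> G \subset F -> G' \subset G ->
  (forall e, crisp inc G (2 * hrank inc F * k) e -> e \notin G') ->
  2 * #|kactive G'| <= #|kactive G|.
Proof.
move=> k0 GF sG crisp_out.
have [-> | [K0 K0G']] := set_0Vmem (kactive G'); first by rewrite cards0.
set r := hrank inc F.
have r0 : 0 < r.
  move: K0G'; rewrite !inE => /andP[_ /set0Pn[e]].
  rewrite inE => /and3P[eG' /set0Pn[x /setIP[xe _]] _].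
  apply: leq_trans (card_inc_le_hrank (subsetP GF e (subsetP sG e eG'))).
  by apply/card_gt0P; exists x.
have lower : 2 * r * k * #|kactive G'| <= \sum_(K in kcomps) #|hdelta inc G K|.
  rewrite mulnC -sum_nat_const [leqRHS](big_setID (kactive G')) /= (setIidPr (kactive_sub G')).
  apply: leq_trans (leq_addr _ _); apply: leq_sum => K /[!inE] /andP[_ KG'].
  exact: crisp_free_hdelta sG crisp_out KG'.
have upper := sum_card_hdelta_kcomps GF.
have G0 : kactive G != set0 by apply/set0Pn; exists K0; apply: subsetP (kactiveS sG) K0 K0G'.
have count := leq_mul (leqnn r) (card_kweak_kactive GF G0).
have : r * k * (2 * #|kactive G'| + 1) <= r * k * #|kactive G|.
  move: lower upper count; rewrite -/r; nia.
rewrite leq_pmul2l ?muln_gt0 ?r0 //; lia.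
Qed.

Lemma weak_edges_loop_kactive (P : {set Ed} -> nat -> {set Ed}) m (Hc E' : {set Ed}) :
  0 < k ->
  (forall G : {set Ed}, G \subset F ->
     t_partition inc G (2 * hrank inc F * k) (P G (2 * hrank inc F * k))) ->
  Hc = F :\: E' ->
  2 ^ m * #|kactive (F :\: weak_edges_loop P (2 * hrank inc F * k) m Hc E')|
    <= #|kactive Hc|.
Proof.
move=> k0 Ppart; elim: m Hc E' => [|m IH] Hc E' eHc /=; first by rewrite mul1n eHc.
set E'' := E' :|: _.
have HcF : Hc \subset F by rewrite eHc subsetDl.
have eHc'' : Hc :\: E'' = F :\: E'' by rewrite eHc setDDl setUA setUid.
rewrite expnS -mulnA; apply: leq_trans (leq_mul (leqnn 2) (IH _ _ eHc'')) _.
have [_ crispP] := Ppart Hc HcF.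
apply: kactive_halve k0 HcF (subsetDl _ _) _ => e /crispP eP.
by rewrite !inE eP orbT.
Qed.

End KComponents.
End Hypergraph.

Theorem theorem3p3 (V Ed : finType) (inc : Ed -> {set V}) (F : {set Ed})
  (k : nat) (P : {set Ed} -> nat -> {set Ed}) :
  0 < k ->
  (forall (G : {set Ed}) (t : nat), G \subset F ->
     t_partition inc G t (P G t) /\ light inc G (P G t) (2 * t)) ->
  light inc F (weak_edges inc P F k) (4 * hrank inc F * k) /\
  (forall e, e \in F -> k_weak inc F k e -> e \in weak_edges inc P F k).
Proof.
move=> k0 HP; set t := 2 * hrank inc F * k; set m := (trunc_log 2 #|V|).+1.
have [RF cardR] :=
  weak_edges_loop_light m (fun G GF => (HP G t GF).2) (esym (setD0 F)) (sub0set F).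
have halved :=
  weak_edges_loop_kactive m k0 (fun G GF => (HP G t GF).1) (esym (setD0 F)).
rewrite /weak_edges -/t -/m; set R := weak_edges_loop _ _ _ _ _ in RF cardR halved *.
split.
  split=> //; rewrite cards0 add0n in cardR.
  have -> : 4 * hrank inc F * k = 2 * t by rewrite /t !mulnA.
  rewrite mulnBr; lia.
move=> e eF ew; apply: contraT => eR.
have [x xe] := set0Pn _ (k_weak_inc_neq0 ew).
have eFR : e \in F :\: R by rewrite inE eR.
have active := kcomp_kactive (subsetDl F R) eFR (k_weak_kweak eF ew) xe.
have small : #|kactive inc F k F| < 2 ^ m.
  apply: leq_ltn_trans (trunc_log_ltn _ (isT : 1 < 2)).
  exact: leq_trans (subset_leq_card (kactive_sub _ _ _ _)) (card_kcomps _ _ _).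
have /card_gt0P/(leq_pmulr (2 ^ m)) big : exists K, K \in kactive inc F k (F :\: R).
  by exists (kcomp inc F k x).
by move: (leq_trans big halved); rewrite leqNgt small.
Qed.
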